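(* Let $k\ge1$ be an integer, let $G$ be a graph and let $A,B\subseteq V(G)$ satisfy $\mathrm{dist}(A,B)>2^k$ and \[\mathrm{tp}_k\big(G\langle X\mapsto A\rangle[N_{2^{k-1}-1}[A]]\big)=\mathrm{tp}_k\big(G\langle X\mapsto B\rangle[N_{2^{k-1}-1}[B]]\big).\] Let $\bar w\in V(G)^{|\bar y|}$ be a tuple of vertices with $\mathrm{dist}(\bar w,A\cup B)\ge 2^k$. Then for every first-order formula $\varphi(\bar y,x)$ of quantifier rank at most $k-1$ in the signature of $G$, \[G\langle A\rangle\models\exists x\in A\ \varphi(\bar w,x)\iff G\langle B\rangle\models\exists x\in B\ \varphi(\bar w,x).\]
   Context: Graphs are finite, loopless, undirected, with finitely many unary color predicates. $\mathrm{dist}(\bar a,\bar b)$ is the minimum distance between an element of $\bar a$ and one of $\bar b$ (sets or tuples); $N_r[S]$ is the set of vertices at distance at most $r$ from $S$. $G\langle X\mapsto W\rangle$ is $G$ expanded by a new unary predicate $X$ interpreted as $W$; $G\langle W\rangle$ denotes the expansion by a new unary predicate (also named $W$) interpreted as $W$, and $\exists x\in W\,\psi$ abbreviates $\exists x\,(W(x)\wedge\psi)$. $H[S]$ is the induced substructure (colors restricted). $\mathrm{tp}_k(H)$ is the set of first-order sentences of quantifier rank at most $k$ (over the signature of $H$) true in $H$; equality of types means the two structures satisfy the same such sentences. *)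

From HB Require Import structures.
From mathcomp Require Import all_boot.
Set Implicit Arguments. Unset Strict Implicit. Unset Printing Implicit Defensive.

Record structure (c : nat) := Struct {
  dom :> finType;
  adj : rel dom;
  col : 'I_c -> pred dom }.
Arguments dom {c} s.
Arguments adj {c} s.
Arguments col {c} s.

Definition is_graph c (G : structure c) : Prop :=
  irreflexive (adj G) /\ symmetric (adj G).

Inductive formula (c : nat) : Type :=
| FFalse
| FTrue
| FEq   of nat & nat
| FAdj  of nat & nat
| FCol  of 'I_c & nat
| FNot  of formula c
| FAnd  of formula c & formula c
| FOr   of formula c & formula c
| FImp  of formula c & formula c
| FEx   of nat & formula c
| FAll  of nat & formula c.
Arguments FFalse {c}. Arguments FTrue {c}.
Arguments FEq {c}. Arguments FAdj {c}.

Fixpoint qrank c (f : formula c) : nat :=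
  match f with
  | FNot g => qrank g
  | FAnd g h | FOr g h | FImp g h => maxn (qrank g) (qrank h)
  | FEx _ g | FAll _ g => (qrank g).+1
  | _ => 0
  end.

Fixpoint fv c (f : formula c) : seq nat :=
  match f with
  | FEq u v | FAdj u v => [:: u; v]
  | FCol _ v => [:: v]
  | FNot g => fv g
  | FAnd g h | FOr g h | FImp g h => fv g ++ fv h
  | FEx x g | FAll x g => filter (fun y => y != x) (fv g)
  | _ => [::]
  end.

Definition sentence c (f : formula c) : bool := nilp (fv f).

(* Assignments are partial (so that empty structures are handled correctly);
   atoms mentioning an unassigned variable are false. *)
Definition upd (T : Type) (env : nat -> option T) (x : nat) (a : T) :=
  fun i => if i == x then Some a else env i.

Fixpoint holds c (M : structure c) (env : nat -> option M) (f : formula c) : Prop :=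
  match f with
  | FFalse => False
  | FTrue => True
  | FEq u v => match env u, env v with Some a, Some b => a = b | _, _ => False end
  | FAdj u v => match env u, env v with Some a, Some b => adj M a b | _, _ => False end
  | FCol i v => match env v with Some a => col M i a | None => False end
  | FNot g => ~ holds env g
  | FAnd g h => holds env g /\ holds env h
  | FOr g h => holds env g \/ holds env h
  | FImp g h => holds env g -> holds env h
  | FEx x g => exists a : M, holds (upd env x a) g
  | FAll x g => forall a : M, holds (upd env x a) g
  end.

Definition empty_env (T : Type) : nat -> option T := fun _ => None.

Definition models c (M : structure c) (f : formula c) : Prop :=
  holds (@empty_env M) f.

Definition same_type c (k : nat) (M N : structure c) : Prop :=
  forall f : formula c, sentence f -> qrank f <= k -> (models M f <-> models N f).

(* Expansion M<X |-> W>: new colour with index ord_max. *)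
Definition expand c (M : structure c) (W : {set M}) : structure c.+1 :=
  @Struct c.+1 M (adj M)
    (fun i => match unlift ord_max i with
              | Some j => col M j
              | None => fun x => x \in W
              end).

Definition induced c (M : structure c) (S : {set M}) : structure c :=
  @Struct c {x : M | x \in S}
    (fun x y => adj M (val x) (val y))
    (fun i x => col M i (val x)).

Fixpoint liftf c (f : formula c) : formula c.+1 :=
  match f with
  | FFalse => FFalse
  | FTrue => FTrue
  | FEq u v => FEq u v
  | FAdj u v => FAdj u v
  | FCol i v => FCol (lift ord_max i) v
  | FNot g => FNot (liftf g)
  | FAnd g h => FAnd (liftf g) (liftf h)
  | FOr g h => FOr (liftf g) (liftf h)
  | FImp g h => FImp (liftf g) (liftf h)
  | FEx x g => FEx x (liftf g)
  | FAll x g => FAll x (liftf g)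
  end.

Fixpoint within c (M : structure c) (r : nat) (u v : M) : bool :=
  match r with
  | 0 => u == v
  | r'.+1 => within r' u v || [exists z, within r' u z && adj M z v]
  end.

Definition nbhd c (M : structure c) (r : nat) (S : {set M}) : {set M} :=
  [set v | [exists s in S, within r s v]].

Definition dist_gt c (M : structure c) (S1 S2 : {set M}) (d : nat) : Prop :=
  forall a b, a \in S1 -> b \in S2 -> ~~ within d a b.

(* Since dist(A, B) > 2^k, the neighbourhoods of radius 2^(k-1) - 1 of A and of B
   are far apart. Two assignments are r-swappable when one arises from the other by
   exchanging values near A with values near B that are r-equivalent in the local
   structures, all other values being equal and far from both sides. Swappable
   assignments satisfy the same formulas of rank r: atoms cannot relate the two sides,
   and in an Ehrenfeucht-Fraisse round a new element either lies within 2^r of one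
   side, where the equality of local types provides its partner on the other side
   (closeness to placed values and to A, B being expressible with rank r), or is far
   from both and is kept unchanged; radii halve from round to round. The theorem
   starts from the witness x in A, its type-partner in B, and the parameters w, which
   are far from A and B. *)

From mathcomp Require Import all_boot zify.
From Stdlib Require Import Classical.
Set Implicit Arguments. Unset Strict Implicit. Unset Printing Implicit Defensive.

Local Notation env T := (nat -> option T).

Section Within.
Variables (c : nat) (M : structure c).

Lemma withinS n (u v : M) : within n u v -> within n.+1 u v.
Proof. by move=> h /=; rewrite h. Qed.

Lemma within_mono m n (u v : M) : m <= n -> within m u v -> within n u v.
Proof.
move=> /subnKC <-; elim: (n - m) => [|d IH] h; first by rewrite addn0.
by rewrite addnS; apply/withinS/IH.
Qed.

Lemma within_refl n (u : M) : within n u u.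
Proof. by apply: (@within_mono 0) => /=. Qed.

Lemma within_trans m n (u v w : M) :
  within m u v -> within n v w -> within (m + n) u w.
Proof.
move=> huv; elim: n w => [|n IH] w /=; first by move/eqP <-; rewrite addn0.
rewrite addnS /= => /orP [h|/existsP [z /andP [hz hzw]]]; first by rewrite IH.
by apply/orP; right; apply/existsP; exists z; rewrite IH.
Qed.

Lemma within_split m n (u w : M) :
  within (m + n) u w -> exists2 v, within m u v & within n v w.
Proof.
elim: n w => [|n IH] w; first by rewrite addn0 => h; exists w => /=.
rewrite addnS /= => /orP [/IH [v h1 h2]|/existsP [z /andP [/IH [v h1 h2] hzw]]].
  by exists v => //; apply: withinS.
by exists v => //=; apply/orP; right; apply/existsP; exists z; rewrite h2.
Qed.

Lemma within1 (u v : M) : within 1 u v <-> u = v \/ adj M u v.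
Proof.
split => /=.
  by case/orP => [/eqP ->|/existsP [z /andP [/eqP <- h]]]; [left|right].
case => [->|h]; first by rewrite eqxx.
by apply/orP; right; apply/existsP; exists u; rewrite eqxx h.
Qed.

Lemma within_sym : symmetric (adj M) -> forall n (u v : M), within n u v = within n v u.
Proof.
move=> Msym n; suff sym_imp : forall x y : M, within n x y -> within n y x.
  by move=> u v; apply/idP/idP; apply: sym_imp.
elim: n => [|n IH] x y /=; first by move=> /eqP ->.
case/orP => [h|/existsP [z /andP [hz hzy]]]; first by rewrite IH.
have hyz : within 1 y z by apply/within1; right; rewrite Msym.
by have := within_trans hyz (IH _ _ hz); rewrite add1n.
Qed.

Lemma nbhdP r (S : {set M}) v :
  reflect (exists2 s, s \in S & within r s v) (v \in nbhd r S).
Proof.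
rewrite inE; apply: (iffP existsP) => [[s /andP [hs h]]|[s hs h]]; exists s => //.
by rewrite hs.
Qed.

Lemma mem_nbhd r (S : {set M}) s : s \in S -> s \in nbhd r S.
Proof. by move=> hs; apply/nbhdP; exists s => //; apply: within_refl. Qed.

Lemma nbhd_mono m n (S : {set M}) v : m <= n -> v \in nbhd m S -> v \in nbhd n S.
Proof. by move=> hmn /nbhdP [s hs h]; apply/nbhdP; exists s => //; apply: within_mono h. Qed.

Lemma nbhd_trans m n (S : {set M}) u v :
  u \in nbhd m S -> within n u v -> v \in nbhd (m + n) S.
Proof. by move=> /nbhdP [s hs h] huv; apply/nbhdP; exists s => //; apply: within_trans huv. Qed.

End Within.

Lemma within_expand c (M : structure c) (W : {set M}) n (u v : M) :
  within (M := expand W) n u v = within n u v.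
Proof.
elim: n u v => //= n IH u v; rewrite IH; congr orb; apply: eq_existsb => z.
by rewrite IH.
Qed.

Lemma within_induced_val c (M : structure c) (S : {set M}) n (u v : induced S) :
  within n u v -> within n (val u) (val v).
Proof.
elim: n v => [v /= /eqP -> //|n IH v] /=.
case/orP => [/IH -> //|/existsP [z /andP [hz hzv]]].
by apply/orP; right; apply/existsP; exists (val z); rewrite IH.
Qed.

Lemma within_induced c (M : structure c) (S : {set M}) n (u v : induced S) :
  (forall z, within n (val u) z -> z \in S) ->
  within n (val u) (val v) -> within n u v.
Proof.
elim: n v => /= [v _ /eqP /val_inj -> //|n IH v ball].
have ball' z : within n (val u) z -> z \in S by move/withinS/ball.
case/orP => [/(IH _ ball') -> //|/existsP [z /andP [hz hzv]]].
have zS : z \in S by apply: ball; rewrite hz.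
by apply/orP; right; apply/existsP; exists (Sub z zS); rewrite /= hzv IH.
Qed.

Lemma upd_eq (T : Type) (e : env T) x a : upd e x a x = Some a.
Proof. by rewrite /upd eqxx. Qed.

Lemma upd_neq (T : Type) (e : env T) x a v : v != x -> upd e x a v = e v.
Proof. by rewrite /upd => /negbTE ->. Qed.

Definition dropv (T : Type) (x : nat) (e : env T) : env T :=
  fun v => if v == x then None else e v.

Lemma dropv_Some (T : Type) x (e : env T) v a : dropv x e v = Some a -> e v = Some a.
Proof. by rewrite /dropv; case: eqP. Qed.

Lemma holds_ext c (M : structure c) (f : formula c) (e e' : env M) :
  {in fv f, e =1 e'} -> holds e f <-> holds e' f.
Proof.
have agree_upd x a (g : formula c) (h h' : env M) :
    {in fv (FEx x g), h =1 h'} -> {in fv g, upd h x a =1 upd h' x a}.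
  move=> hh v hv; rewrite /upd; case: eqP => // /eqP vx.
  by apply: hh; rewrite /= mem_filter vx.
have agree_cat (g g' : formula c) (h h' : env M) :
    {in fv g ++ fv g', h =1 h'} -> {in fv g, h =1 h'} /\ {in fv g', h =1 h'}.
  by move=> hh; split=> v hv; apply: hh; rewrite mem_cat hv ?orbT.
elim: f e e' => //=.
- by move=> u v e e' he; rewrite (he u) ?(he v) // !inE eqxx ?orbT.
- by move=> u v e e' he; rewrite (he u) ?(he v) // !inE eqxx ?orbT.
- by move=> i v e e' he; rewrite (he v) // inE eqxx.
- by move=> g IH e e' he; rewrite (IH e e').
- by move=> g IHg g' IHg' e e' /agree_cat [hg hg']; rewrite (IHg e e') // (IHg' e e').
- by move=> g IHg g' IHg' e e' /agree_cat [hg hg']; rewrite (IHg e e') // (IHg' e e').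
- by move=> g IHg g' IHg' e e' /agree_cat [hg hg']; rewrite (IHg e e') // (IHg' e e').
- move=> x g IH e e' he.
  by split=> -[a ha]; exists a; apply/(IH _ _ (agree_upd x a g e e' he)).
- move=> x g IH e e' he.
  by split=> ha a; apply/(IH _ _ (agree_upd x a g e e' he)).
Qed.

Lemma holds_liftf c (M : structure c) (W : {set M}) (f : formula c) (e : env M) :
  holds (M := expand W) e (liftf f) <-> holds e f.
Proof.
elim: f e => //=.
- by move=> i v e; case: (e v) => // a; rewrite liftK.
- by move=> g IH e; rewrite IH.
- by move=> g IHg g' IHg' e; rewrite IHg IHg'.
- by move=> g IHg g' IHg' e; rewrite IHg IHg'.
- by move=> g IHg g' IHg' e; rewrite IHg IHg'.
- by move=> x g IH e; split=> -[a ha]; exists a; apply/IH.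
- by move=> x g IH e; split=> ha a; apply/IH.
Qed.

Definition dom_env (T : Type) (e : env T) : pred nat := fun v => isSome (e v).

Lemma dom_env_upd (T : Type) (e : env T) x a v :
  (v \in dom_env (upd e x a)) = (v == x) || (v \in dom_env e).
Proof. by rewrite !unfold_in /upd; case: eqP. Qed.

Lemma dom_env_drop (T : Type) (e : env T) x v :
  (v \in dom_env (dropv x e)) = (v != x) && (v \in dom_env e).
Proof. by rewrite !unfold_in /dropv; case: eqP. Qed.

Definition equiv_env c (M N : structure c) r (e1 : env M) (e2 : env N) : Prop :=
  dom_env e1 =i dom_env e2 /\
  forall f, qrank f <= r -> {subset fv f <= dom_env e1} -> holds e1 f <-> holds e2 f.

Section EquivEnv.
Variables (c : nat) (M N : structure c).

Lemma equiv_env_mono r r' (e1 : env M) (e2 : env N) :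
  r <= r' -> equiv_env r' e1 e2 -> equiv_env r e1 e2.
Proof. by move=> hr [hd he]; split=> // f hf; apply: he; apply: leq_trans hr. Qed.

Lemma equiv_env_sym r (e1 : env M) (e2 : env N) : equiv_env r e1 e2 -> equiv_env r e2 e1.
Proof.
move=> [hd he]; split=> [v|f hf hfv]; first by rewrite hd.
by apply: iff_sym; apply: he => // v /hfv; rewrite hd.
Qed.

Lemma equiv_env_drop r x (e1 : env M) (e2 : env N) :
  equiv_env r e1 e2 -> equiv_env r (dropv x e1) (dropv x e2).
Proof.
move=> [hd he]; split=> [v|f hf hfv]; first by rewrite !dom_env_drop hd.
have hx v : v \in fv f -> v != x by move/hfv; rewrite dom_env_drop => /andP [].
rewrite (@holds_ext _ _ _ _ e1); last by move=> v /hx; rewrite /dropv => /negbTE ->.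
rewrite [holds (dropv _ e2) _](@holds_ext _ _ _ _ e2); last first.
  by move=> v /hx; rewrite /dropv => /negbTE ->.
by apply: he => // v hv; have := hfv v hv; rewrite dom_env_drop => /andP [].
Qed.

(* Otherwise every [b] is separated from [a] by a formula of rank [r]; as [N] is
   finite, their conjunction [f] gives [FEx x f], of rank [r.+1], true at [e1] only. *)
Lemma equiv_env_forth r (e1 : env M) (e2 : env N) x a :
  equiv_env r.+1 e1 e2 -> exists b, equiv_env r (upd e1 x a) (upd e2 x b).
Proof.
move=> [hd he]; apply: NNPP => none.
have separate b : exists f, [/\ qrank f <= r, {subset fv f <= dom_env (upd e1 x a)},
    holds (upd e1 x a) f & ~ holds (upd e2 x b) f].
  apply: NNPP => nof; apply: none; exists b.
  split=> [v|f hf hfv]; first by rewrite !dom_env_upd hd.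
  have [h1|h1] := classic (holds (upd e1 x a) f).
    by split=> // _; apply: NNPP => h2; apply: nof; exists f.
  split=> [/h1 //|h2]; exfalso; apply: nof.
  by exists (FNot f); split.
have separate_all (s : seq N) : exists f, [/\ qrank f <= r,
    {subset fv f <= dom_env (upd e1 x a)}, holds (upd e1 x a) f &
    forall b, b \in s -> ~ holds (upd e2 x b) f].
  elim: s => [|b s [f [hf hfv h1 h2]]]; first by exists FTrue.
  have [g [hg hgv g1 g2]] := separate b.
  exists (FAnd g f); split=> //=; first by rewrite geq_max hg hf.
    by move=> v; rewrite mem_cat => /orP [/hgv|/hfv].
  by move=> b'; rewrite inE => /orP [/eqP -> []|/h2 nb []].
have [f [hf hfv h1 h2]] := separate_all (enum N).
have [] := he (FEx x f) hf.
  move=> v /=; rewrite mem_filter => /andP [vx /hfv].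
  by rewrite dom_env_upd (negbTE vx).
move=> /(_ (ex_intro _ a h1)) [b hb] _.
by apply: (h2 b) => //; rewrite mem_enum.
Qed.

Lemma equiv_env_None r (e1 : env M) (e2 : env N) v :
  equiv_env r e1 e2 -> e1 v = None -> e2 v = None.
Proof. by move=> [hd _] e1v; move: (hd v); rewrite !unfold_in e1v; case: (e2 v). Qed.

Lemma equiv_env_Some r (e1 : env M) (e2 : env N) v a :
  equiv_env r e1 e2 -> e1 v = Some a -> exists b, e2 v = Some b.
Proof.
by move=> [hd _] e1v; move: (hd v); rewrite !unfold_in e1v; case: (e2 v) => // b; exists b.
Qed.

End EquivEnv.

Lemma same_type_equiv_env c (M N : structure c) r :
  same_type r M N -> equiv_env r (@empty_env M) (@empty_env N).
Proof.
move=> hT; split=> // f hf hfv; apply: hT => //.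
rewrite /sentence; case E: (fv f) => [|v s] //.
by have := hfv v; rewrite E mem_head => /(_ isT).
Qed.

(* The midpoint variable [(x + y).+1] is distinct from [x] and [y]. *)
Fixpoint fm_within c (j x y : nat) : formula c :=
  match j with
  | 0 => FOr (FEq x y) (FAdj x y)
  | j'.+1 =>
      FEx (x + y).+1 (FAnd (fm_within c j' x (x + y).+1) (fm_within c j' (x + y).+1 y))
  end.

Fixpoint fm_near_col c (j x : nat) : formula c.+1 :=
  match j with
  | 0 => FCol ord_max x
  | j'.+1 => FEx x.+1 (FAnd (fm_within c.+1 j' x x.+1) (fm_near_col c j' x.+1))
  end.

Lemma qrank_fm_within c j x y : qrank (fm_within c j x y) = j.
Proof. by elim: j x y => //= j IH x y; rewrite !IH maxnn. Qed.

Lemma fv_fm_within c j x y : {subset fv (fm_within c j x y) <= [:: x; y]}.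
Proof.
elim: j x y => [|j IH] x y v /=; first by rewrite !inE => /or4P [] ->; rewrite ?orbT.
rewrite mem_filter mem_cat => /andP [vz /orP [] /IH]; rewrite !inE (negbTE vz) ?orbF /=;
  by move=> ->; rewrite ?orbT.
Qed.

Lemma holds_fm_within c (M : structure c) j x y (e : env M) a b :
  e x = Some a -> e y = Some b -> holds e (fm_within c j x y) <-> within (2 ^ j) a b.
Proof.
elim: j x y e a b => [|j IH] x y e a b ex ey /=; first by rewrite ex ey within1.
set z := (x + y).+1.
have ex' m : upd e z m x = Some a by rewrite upd_neq ?ex //; apply/eqP; lia.
have ey' m : upd e z m y = Some b by rewrite upd_neq ?ey //; apply/eqP; lia.
have ez m : upd e z m z = Some m by rewrite upd_eq.
rewrite expnS mul2n -addnn; split.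
  by move=> [m [/(IH _ _ _ _ _ (ex' m) (ez m)) h1 /(IH _ _ _ _ _ (ez m) (ey' m)) h2]];
    apply: within_trans h1 h2.
move=> /within_split [m h1 h2]; exists m.
by split; [apply/(IH _ _ _ _ _ (ex' m) (ez m))|apply/(IH _ _ _ _ _ (ez m) (ey' m))].
Qed.

Lemma qrank_fm_near_col c j x : qrank (fm_near_col c j x) = j.
Proof. by elim: j x => //= j IH x; rewrite IH qrank_fm_within maxnn. Qed.

Lemma fv_fm_near_col c j x : {subset fv (fm_near_col c j x) <= [:: x]}.
Proof.
elim: j x => [|j IH] x v //=; rewrite mem_filter mem_cat => /andP [vx /orP []].
  by move/fv_fm_within; rewrite !inE (negbTE vx) orbF.
by move/IH; rewrite inE (negbTE vx).
Qed.

Lemma holds_fm_near_col c (M : structure c.+1) j x (e : env M) a :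
  e x = Some a ->
  holds e (fm_near_col c j x) <-> exists2 z, col M ord_max z & within (2 ^ j - 1) a z.
Proof.
elim: j x e a => [|j IH] x e a ex /=.
  by rewrite ex; split=> [h|[z h /eqP ->]] //; exists a => //=.
have ex' m : upd e x.+1 m x = Some a by rewrite upd_neq ?ex //; apply/eqP; lia.
have ex1 m : upd e x.+1 m x.+1 = Some m by rewrite upd_eq.
have -> : 2 ^ j.+1 - 1 = 2 ^ j + (2 ^ j - 1).
  by rewrite expnS mul2n -addnn addnBA // expn_gt0.
split.
  move=> [m [/(holds_fm_within j (ex' m) (ex1 m)) h1 /(IH _ _ _ (ex1 m)) [z hz h2]]].
  by exists z => //; apply: within_trans h1 h2.
move=> [z hz /within_split [m h1 h2]]; exists m.
by split; [apply/(holds_fm_within j (ex' m) (ex1 m))|apply/(IH _ _ _ (ex1 m)); exists z].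
Qed.

Definition swapped (T : Type) (o1 o2 : option T) (p q : T) : Prop :=
  (o1, o2) = (Some p, Some q) \/ (o1, o2) = (Some q, Some p).

Lemma swapped_sym (T : Type) (o1 o2 : option T) p q : swapped o1 o2 p q -> swapped o2 o1 p q.
Proof. by case=> -[-> ->]; [right|left]. Qed.

Lemma swapped_comm (T : Type) (o1 o2 : option T) p q : swapped o1 o2 p q -> swapped o1 o2 q p.
Proof. by case=> -[-> ->]; [right|left]. Qed.

Definition opt_rel (T : Type) (R : T -> T -> Prop) (a b : option T) : Prop :=
  if a is Some x then (if b is Some y then R x y else False) else False.

Section Locality.
Variables (c : nat) (G : structure c) (K : nat).
Hypothesis Gsym : symmetric (adj G).

Local Notation withinG := (@within c G).
Local Notation rho := (2 ^ K - 1).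
Local Notation loc S := (induced (M := expand S) (nbhd (M := G) rho S)).

Lemma pow2_double_le r : r < K -> 2 ^ r + 2 ^ r <= 2 ^ K.
Proof. by move=> rK; rewrite addnn -mul2n -expnS leq_pexp2l. Qed.

Lemma pow2_sub_mono r : 2 ^ K - 2 ^ r.+1 <= 2 ^ K - 2 ^ r.
Proof. by rewrite leq_sub2l // leq_pexp2l. Qed.

Lemma within_loc_val (S : {set G}) n (u v : loc S) :
  within n u v -> withinG n (val u) (val v).
Proof. by move/within_induced_val; rewrite within_expand. Qed.

Lemma within_loc (S : {set G}) m n (u v : loc S) :
  val u \in nbhd m S -> m + n <= rho -> withinG n (val u) (val v) -> within n u v.
Proof.
move=> hu hmn h; apply: within_induced; last by rewrite within_expand.
by move=> z; rewrite within_expand => /(nbhd_trans hu) /(nbhd_mono hmn).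
Qed.

Lemma transfer_near_set (S T : {set G}) r (e1 : env (loc S)) (e2 : env (loc T)) x p q :
  r < K -> equiv_env r e1 e2 -> e1 x = Some p -> e2 x = Some q ->
  val p \in nbhd (2 ^ r - 1) S -> val q \in nbhd (2 ^ r - 1) T.
Proof.
move=> rK [_ he] e1x e2x hp; have := pow2_double_le rK => hK.
have hfv : {subset fv (fm_near_col c r x) <= dom_env e1}.
  by move=> v /fv_fm_near_col; rewrite inE => /eqP ->; rewrite unfold_in e1x.
have [+ _] := he _ (eq_leq (qrank_fm_near_col c r x)) hfv.
rewrite (holds_fm_near_col r e1x) (holds_fm_near_col r e2x); case.
  have /nbhdP [s sS sp] := hp.
  exists (Sub s (mem_nbhd _ sS) : loc S); first by rewrite /= unlift_none.
  by apply: (within_loc hp); [lia|rewrite within_sym].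
move=> z; rewrite /= unlift_none => zT /within_loc_val; rewrite within_sym // => zq.
by apply/nbhdP; exists (val z).
Qed.

Lemma transfer_within (S T : {set G}) r (e1 : env (loc S)) (e2 : env (loc T))
    x v p q p' q' :
  r < K -> equiv_env r e1 e2 -> e1 x = Some p -> e2 x = Some q ->
  e1 v = Some p' -> e2 v = Some q' -> val p' \in nbhd (2 ^ K - 2 ^ r.+1) S ->
  withinG (2 ^ r) (val p') (val p) -> withinG (2 ^ r) (val q') (val q).
Proof.
move=> rK [_ he] e1x e2x e1v e2v hp' h; have := pow2_double_le rK => hK.
have hfv : {subset fv (fm_within c.+1 r v x) <= dom_env e1}.
  by move=> u /fv_fm_within; rewrite !inE => /orP [] /eqP ->;
    rewrite unfold_in ?e1x ?e1v.
have [+ _] := he _ (eq_leq (qrank_fm_within c.+1 r v x)) hfv.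
rewrite (holds_fm_within r e1v e1x) (holds_fm_within r e2v e2x) => /(_ _) /within_loc_val.
by apply; apply: (within_loc hp') h; rewrite expnS; lia.
Qed.

Definition near_side (S : {set G}) r (g : env (loc S)) (a : G) : Prop :=
  a \in nbhd (2 ^ r - 1) S \/ exists v p, g v = Some p /\ withinG (2 ^ r) (val p) a.
Arguments near_side : clear implicits.

Lemma near_side_mono S r g a : near_side S r g a -> near_side S r.+1 g a.
Proof.
case=> [ha|[v [p [gv h]]]]; [left|right].
  by apply: nbhd_mono ha; rewrite leq_sub2r // leq_pexp2l.
by exists v, p; split=> //; apply: within_mono h; rewrite leq_pexp2l.
Qed.

Lemma near_side_drop S r x g a : near_side S r (dropv x g) a -> near_side S r g a.
Proof.
by case=> [ha|[v [p [gv h]]]]; [left|right; exists v, p; rewrite (dropv_Some gv)].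
Qed.

Lemma near_side_trans S r g a o :
  near_side S r g a -> withinG (2 ^ r) a o -> near_side S r.+1 g o.
Proof.
have e : 2 ^ r.+1 = 2 ^ r + 2 ^ r by rewrite expnS mul2n addnn.
case=> [ha|[v [p [gv h]]]] hao; [left|right].
  by apply: nbhd_mono (nbhd_trans ha hao); rewrite e; lia.
by exists v, p; split=> //; rewrite e; apply: within_trans h hao.
Qed.

Lemma near_side_upd S r x g p o :
  near_side S r (dropv x g) (val p) -> near_side S r (upd (dropv x g) x p) o ->
  near_side S r.+1 g o.
Proof.
move=> hp [ho|[v [q [gv h]]]]; first by apply: near_side_mono; left.
move: gv; rewrite /upd; case: eqP => [_ [pq]|_ gv].
  by rewrite -pq in h; exact: near_side_trans (near_side_drop hp) h.
by apply/near_side_mono/(near_side_drop (x := x)); right; exists v, q.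
Qed.

Lemma near_side_nbhd S r g a : r < K ->
  (forall v p, g v = Some p -> val p \in nbhd (2 ^ K - 2 ^ r.+1) S) ->
  near_side S r g a -> a \in nbhd (2 ^ K - 2 ^ r) S.
Proof.
move=> rK hg; have := pow2_double_le rK => hK.
have e : 2 ^ r.+1 = 2 ^ r + 2 ^ r by rewrite expnS mul2n addnn.
case=> [ha|[v [p [/hg hp h]]]]; first by apply: nbhd_mono ha; lia.
by apply: nbhd_mono (nbhd_trans hp h); rewrite e; lia.
Qed.

Lemma near_side_transfer S T r (g : env (loc S)) (h : env (loc T)) x p q : r < K ->
  (forall v p', g v = Some p' -> val p' \in nbhd (2 ^ K - 2 ^ r.+1) S) ->
  equiv_env r (upd (dropv x g) x p) (upd (dropv x h) x q) ->
  near_side S r (dropv x g) (val p) -> near_side T r (dropv x h) (val q).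
Proof.
move=> rK hg heq; have gx : upd (dropv x g) x p x = Some p by rewrite upd_eq.
have hx : upd (dropv x h) x q x = Some q by rewrite upd_eq.
case=> [hp|[v [p' [gv hp']]]]; [left|right].
  exact: transfer_near_set rK heq gx hx hp.
have vx : v != x by move: gv; rewrite /dropv; case: eqP.
have gv' : upd (dropv x g) x p v = Some p' by rewrite upd_neq.
have [q' hv'] := equiv_env_Some heq gv'.
exists v, q'; split; first by rewrite -hv' upd_neq.
exact: transfer_within rK heq gx hx gv' hv' (hg _ _ (dropv_Some gv)) hp'.
Qed.

(* [ga] and [gb] record, in the local structures, the values near [A] and near [B]
   that [e1] and [e2] exchange; variables unbound in [ga] agree in [e1] and [e2] and
   are far from both sides. With [r] rounds left, local values lie within
   [2^K - 2^r] of their side. *)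
Record swap_by (A B : {set G}) r (e1 e2 : env G) (ga : env (loc A)) (gb : env (loc B)) :
  Prop := SwapBy {
  swap_by_rank : r <= K;
  swap_by_equiv : equiv_env r ga gb;
  swap_by_nearA : forall v p, ga v = Some p -> val p \in nbhd (2 ^ K - 2 ^ r) A;
  swap_by_nearB : forall v q, gb v = Some q -> val q \in nbhd (2 ^ K - 2 ^ r) B;
  swap_by_local : forall v p q, ga v = Some p -> gb v = Some q ->
    swapped (e1 v) (e2 v) (val p) (val q);
  swap_by_free : forall v, ga v = None -> e1 v = e2 v /\
    forall o, e1 v = Some o -> ~ near_side A r ga o /\ ~ near_side B r gb o }.
Arguments swap_by : clear implicits.

Lemma swap_by_swap A B r e1 e2 ga gb :
  swap_by A B r e1 e2 ga gb -> swap_by B A r e1 e2 gb ga.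
Proof.
case=> rK heq hA hB hloc hfree; split=> //.
- exact: equiv_env_sym.
- by move=> v q p gv gv'; apply/swapped_comm/hloc.
- move=> v /(equiv_env_None (equiv_env_sym heq)) /hfree [e1v far].
  by split=> // o /far [].
Qed.

Lemma swap_by_sym A B r e1 e2 ga gb :
  swap_by A B r e1 e2 ga gb -> swap_by A B r e2 e1 ga gb.
Proof.
case=> rK heq hA hB hloc hfree; split=> //.
- by move=> v p q gv gv'; apply/swapped_sym/hloc.
- by move=> v /hfree [e1v far]; split=> // o; rewrite -e1v; apply: far.
Qed.

Lemma swap_by_free_step A B r e1 e2 ga gb x a : swap_by A B r.+1 e1 e2 ga gb ->
  ~ near_side A r (dropv x ga) a -> ~ near_side B r (dropv x gb) a ->
  swap_by A B r (upd e1 x a) (upd e2 x a) (dropv x ga) (dropv x gb).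
Proof.
case=> rK heq hA hB hloc hfree farA farB; split.
- exact: ltnW.
- exact/equiv_env_drop/(equiv_env_mono _ heq).
- by move=> v p gv; apply: nbhd_mono (hA _ _ (dropv_Some gv)); apply: pow2_sub_mono.
- by move=> v q gv; apply: nbhd_mono (hB _ _ (dropv_Some gv)); apply: pow2_sub_mono.
- by move=> v p q; rewrite /dropv /upd; case: eqP => // _; apply: hloc.
- move=> v; rewrite /dropv /upd; case: eqP => [_ _|_ /hfree [e1v far]].
    by split=> // o [<-].
  split=> // o /far [nA nB].
  by split=> /near_side_drop /near_side_mono; [apply: nA|apply: nB].
Qed.

Lemma swap_by_pair_step A B r e1 e2 ga gb x p q : swap_by A B r.+1 e1 e2 ga gb ->
  equiv_env r (upd (dropv x ga) x p) (upd (dropv x gb) x q) ->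
  near_side A r (dropv x ga) (val p) -> near_side B r (dropv x gb) (val q) ->
  swap_by A B r (upd e1 x (val p)) (upd e2 x (val q))
    (upd (dropv x ga) x p) (upd (dropv x gb) x q).
Proof.
case=> rK _ hA hB hloc hfree heq nearp nearq.
have hA' v p' : dropv x ga v = Some p' -> val p' \in nbhd (2 ^ K - 2 ^ r.+1) A.
  by move=> gv; apply: hA (dropv_Some gv).
have hB' v q' : dropv x gb v = Some q' -> val q' \in nbhd (2 ^ K - 2 ^ r.+1) B.
  by move=> gv; apply: hB (dropv_Some gv).
split=> //.
- exact: ltnW.
- move=> v p'; rewrite /upd; case: eqP => [_ [<-]|_ /hA'].
    exact: near_side_nbhd rK hA' nearp.
  by apply: nbhd_mono; apply: pow2_sub_mono.
- move=> v q'; rewrite /upd; case: eqP => [_ [<-]|_ /hB'].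
    exact: near_side_nbhd rK hB' nearq.
  by apply: nbhd_mono; apply: pow2_sub_mono.
- move=> v p' q'; rewrite /upd /dropv.
  by case: eqP => [_ [<-] [<-]|_]; [left|apply: hloc].
- move=> v; rewrite /upd /dropv; case: eqP => // _ /hfree [e1v far].
  split=> // o /far [nA nB].
  by split=> [/(near_side_upd nearp)|/(near_side_upd nearq)].
Qed.

Lemma swap_by_local_step A B r e1 e2 ga gb x a : swap_by A B r.+1 e1 e2 ga gb ->
  near_side A r (dropv x ga) a ->
  exists b ga' gb', swap_by A B r (upd e1 x a) (upd e2 x b) ga' gb'.
Proof.
move=> H near_a; case: (H) => rK heq hA _ _ _.
have hA' v p : dropv x ga v = Some p -> val p \in nbhd (2 ^ K - 2 ^ r.+1) A.
  by move=> gv; apply: hA (dropv_Some gv).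
have aN : a \in nbhd rho A.
  by apply: nbhd_mono (near_side_nbhd rK hA' near_a); rewrite leq_sub2l // expn_gt0.
pose p : loc A := Sub a aN.
have [q hq] := equiv_env_forth x p (equiv_env_drop x heq).
exists (val q), (upd (dropv x ga) x p), (upd (dropv x gb) x q).
apply: (swap_by_pair_step H hq near_a).
exact: near_side_transfer rK hA hq near_a.
Qed.

Definition swappable A B r e1 e2 := exists ga gb, swap_by A B r e1 e2 ga gb.

Lemma swappable_sym A B r e1 e2 : swappable A B r e1 e2 -> swappable A B r e2 e1.
Proof. by case=> ga [gb H]; exists ga, gb; apply: swap_by_sym. Qed.

Lemma swappable_forth A B r e1 e2 x a : swappable A B r.+1 e1 e2 ->
  exists b, swappable A B r (upd e1 x a) (upd e2 x b).
Proof.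
case=> ga [gb H].
have [near_a|farA] := classic (near_side A r (dropv x ga) a).
  by have [b [ga' [gb' H']]] := swap_by_local_step H near_a; exists b, ga', gb'.
have [near_b|farB] := classic (near_side B r (dropv x gb) a).
  have [b [gb' [ga' H']]] := swap_by_local_step (swap_by_swap H) near_b.
  by exists b, ga', gb'; apply: swap_by_swap.
by exists a, (dropv x ga), (dropv x gb); apply: swap_by_free_step.
Qed.

Section Separated.
Variables A B : {set G}.
Hypothesis hAB : dist_gt A B (2 ^ K.+1).

Lemma loc_not_adjacent p q : p \in nbhd rho A -> q \in nbhd rho B -> ~~ withinG 1 p q.
Proof.
move=> /nbhdP [s sA sp] /nbhdP [t tB tq]; apply/negP => hpq.
have hst : withinG (rho + 1 + rho) s t.
  by apply: within_trans (within_trans sp hpq) _; rewrite within_sym.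
have : 0 < 2 ^ K by rewrite expn_gt0.
by move: (hAB sA tB); rewrite (within_mono _ hst) // expnS; lia.
Qed.

Lemma swap_by_cases r e1 e2 ga gb v : swap_by A B r e1 e2 ga gb ->
  [/\ ga v = None, e1 v = e2 v &
      forall o, e1 v = Some o -> ~ near_side A r ga o /\ ~ near_side B r gb o] \/
  exists p q, [/\ ga v = Some p, gb v = Some q, swapped (e1 v) (e2 v) (val p) (val q),
    val p \in nbhd rho A & val q \in nbhd rho B].
Proof.
case=> rK heq hA hB hloc hfree.
case gv: (ga v) => [p|]; last by have [? ?] := hfree v gv; left.
have [q gbv] := equiv_env_Some heq gv.
have rho_le : 2 ^ K - 2 ^ r <= rho by rewrite leq_sub2l // expn_gt0.
right; exists p, q; split; [by []|by []|exact: hloc|..].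
  exact: nbhd_mono rho_le (hA _ _ gv).
exact: nbhd_mono rho_le (hB _ _ gbv).
Qed.

Lemma far_from_local S r (g : env (loc S)) o v p :
  ~ near_side S r g o -> g v = Some p -> ~~ withinG 1 (val p) o /\ ~~ withinG 1 o (val p).
Proof.
move=> nfar gv; have h : ~~ withinG 1 (val p) o.
  apply/negP => h; apply: nfar; right; exists v, p; split=> //.
  by apply: within_mono h; rewrite expn_gt0.
by split=> //; rewrite within_sym.
Qed.

Lemma swap_by_rel r e1 e2 ga gb (R : G -> G -> Prop) u v :
  swap_by A B r e1 e2 ga gb -> (forall p q, R p q -> withinG 1 p q) ->
  (forall p p' q q', ga u = Some p -> ga v = Some p' -> gb u = Some q -> gb v = Some q' ->
     R (val p) (val p') <-> R (val q) (val q')) ->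
  opt_rel R (e1 u) (e1 v) <-> opt_rel R (e2 u) (e2 v).
Proof.
move=> H hR hloc; rewrite /opt_rel.
have noR p q : ~~ withinG 1 p q -> ~ R p q by move=> /negP h /hR.
have iff_false (P Q : Prop) : ~ P -> ~ Q -> P <-> Q by move=> nP nQ; split=> [/nP|/nQ].
case: (swap_by_cases u H) => [[gu eu fu]|[pu [qu [gu gbu su puA quB]]]];
case: (swap_by_cases v H) => [[gv ev fv]|[pv [qv [gv gbv sv pvA qvB]]]].
- by rewrite eu ev.
- rewrite -eu; case E: (e1 u) => [o|] //; have [nA nB] := fu o E.
  have [_ nAv] := far_from_local nA gv; have [_ nBv] := far_from_local nB gbv.
  by case: sv => -[-> ->]; apply: iff_false; apply: noR.
- rewrite -ev; case E: (e1 v) => [o|]; last by case: (e1 u); case: (e2 u).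
  have [nA nB] := fv o E.
  have [nAu _] := far_from_local nA gu; have [nBu _] := far_from_local nB gbu.
  by case: su => -[-> ->]; apply: iff_false; apply: noR.
- have huv := hloc _ _ _ _ gu gv gbu gbv.
  have cross1 : ~ R (val pu) (val qv) by apply/noR/loc_not_adjacent.
  have cross2 : ~ R (val qu) (val pv).
    by apply/noR; rewrite within_sym //; apply: loc_not_adjacent.
  case: su => -[-> ->]; case: sv => -[-> ->].
  + exact: huv.
  + exact: iff_false.
  + exact: iff_false.
  + exact: iff_sym.
Qed.

Lemma swap_by_col r e1 e2 ga gb i v : swap_by A B r e1 e2 ga gb ->
  (if e1 v is Some p then col G i p else False) <->
  (if e2 v is Some p then col G i p else False).
Proof.
move=> H; case: (swap_by_cases v H) => [[_ -> _] //|[p [q [gv gbv s _ _]]]].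
have hfv : {subset fv (FCol (lift ord_max i) v) <= dom_env ga}.
  by move=> w; rewrite inE => /eqP ->; rewrite unfold_in gv.
have := proj2 (swap_by_equiv H) (FCol (lift ord_max i) v) (leq0n r) hfv.
rewrite /= gv gbv /= !liftK.
by case: s => -[-> ->] h; [exact: h|exact: iff_sym h].
Qed.

Lemma swappable_holds (f : formula c) r e1 e2 :
  qrank f <= r -> swappable A B r e1 e2 -> holds e1 f <-> holds e2 f.
Proof.
elim: f r e1 e2 => //=.
- move=> u v r e1 e2 _ [ga [gb H]].
  apply: (swap_by_rel (R := eq) H) => [p q ->|p p' q q' gu gv gbu gbv].
    exact: within_refl.
  have hfv : {subset fv (FEq (c := c.+1) u v) <= dom_env ga}.
    by move=> w /=; rewrite !inE => /orP [] /eqP ->; rewrite unfold_in ?gu ?gv.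
  have := proj2 (swap_by_equiv H) (FEq u v) (leq0n r) hfv.
  rewrite /= gu gv gbu gbv => -[h1 h2].
  by split=> [/val_inj/h1 ->|/val_inj/h2 ->].
- move=> u v r e1 e2 _ [ga [gb H]].
  apply: (swap_by_rel (R := adj G) H) => [p q h|p p' q q' gu gv gbu gbv].
    by apply/within1; right.
  have hfv : {subset fv (FAdj (c := c.+1) u v) <= dom_env ga}.
    by move=> w /=; rewrite !inE => /orP [] /eqP ->; rewrite unfold_in ?gu ?gv.
  by have := proj2 (swap_by_equiv H) (FAdj u v) (leq0n r) hfv; rewrite /= gu gv gbu gbv.
- by move=> i v r e1 e2 _ [ga [gb H]]; apply: swap_by_col H.
- by move=> g IH r e1 e2 hr hs; rewrite (IH r e1 e2).
- move=> g IHg g' IHg' r e1 e2; rewrite geq_max => /andP [hg hg'] hs.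
  by rewrite (IHg r e1 e2) // (IHg' r e1 e2).
- move=> g IHg g' IHg' r e1 e2; rewrite geq_max => /andP [hg hg'] hs.
  by rewrite (IHg r e1 e2) // (IHg' r e1 e2).
- move=> g IHg g' IHg' r e1 e2; rewrite geq_max => /andP [hg hg'] hs.
  by rewrite (IHg r e1 e2) // (IHg' r e1 e2).
- move=> x g IH [|r] e1 e2 // hr hs; split=> [[a ha]|[b hb]].
    have [b hb] := swappable_forth x a hs; exists b; exact/(IH r _ _ hr hb).
  have [a ha] := swappable_forth x b (swappable_sym hs); exists a.
  exact/(IH r _ _ hr (swappable_sym ha)).
- move=> x g IH [|r] e1 e2 // hr hs; split=> [ha b|hb a].
    have [a ha'] := swappable_forth x b (swappable_sym hs).
    exact/(IH r _ _ hr (swappable_sym ha')).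
  have [b hb'] := swappable_forth x a hs; exact/(IH r _ _ hr hb').
Qed.

End Separated.

Lemma near_side_start S (x0 : loc S) n o : val x0 \in S ->
  near_side S K (upd (@empty_env _) n x0) o ->
  exists2 s, s \in S & withinG (2 ^ K.+1 - 1) o s.
Proof.
have pos : 0 < 2 ^ K by rewrite expn_gt0.
have hK : 2 ^ K <= 2 ^ K.+1 - 1 by rewrite expnS; lia.
move=> x0S [/nbhdP [s sS h]|[v [p [pv h]]]].
  by exists s => //; rewrite within_sym //; apply: within_mono h; lia.
move: pv; rewrite /upd; case: eqP => // _ [px0]; rewrite -px0 in h.
by exists (val x0) => //; rewrite within_sym //; apply: within_mono h.
Qed.

Lemma swap_by_start A B (x0 : loc A) (y0 : loc B) n (e : env G) :
  val x0 \in A -> val y0 \in B ->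
  equiv_env K (upd (@empty_env _) n x0) (upd (@empty_env _) n y0) ->
  (forall v o, e v = Some o -> forall s, s \in A :|: B -> ~~ withinG (2 ^ K.+1 - 1) o s) ->
  swap_by A B K (upd e n (val x0)) (upd e n (val y0))
    (upd (@empty_env _) n x0) (upd (@empty_env _) n y0).
Proof.
move=> x0A y0B heq hfar; split=> //.
- by move=> v p; rewrite /upd; case: eqP => // _ [<-]; rewrite subnn; apply: mem_nbhd.
- by move=> v q; rewrite /upd; case: eqP => // _ [<-]; rewrite subnn; apply: mem_nbhd.
- by move=> v p q; rewrite /upd; case: eqP => // _ [<-] [<-]; left.
- move=> v; rewrite /upd; case: eqP => // _ _; split=> // o /hfar far.
  split=> [/(near_side_start x0A)|/(near_side_start y0B)] [s hs]; apply/negP/far.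
    by rewrite inE hs.
  by rewrite inE hs orbT.
Qed.

End Locality.

Lemma exists_in_transfer c K n (G : structure c) (A B : {set G}) (w : 'I_n -> G)
    (phi : formula c) :
  symmetric (adj G) -> dist_gt A B (2 ^ K.+1) ->
  same_type K.+1 (induced (M := expand A) (nbhd (M := G) (2 ^ K - 1) A))
                 (induced (M := expand B) (nbhd (M := G) (2 ^ K - 1) B)) ->
  (forall (i : 'I_n) b, b \in A :|: B -> ~~ within (2 ^ K.+1 - 1) (w i) b) ->
  qrank phi <= K ->
  let env := fun i => omap w (insub i) in
  let psi := FEx n (FAnd (FCol ord_max n) (liftf phi)) in
  holds (M := expand A) env psi -> holds (M := expand B) env psi.
Proof.
move=> Gsym hAB hT hw hq env psi [a [aA /holds_liftf hphi]].
move: aA; rewrite /= upd_eq unlift_none => aA.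
pose x0 : induced (M := expand A) (nbhd (M := G) (2 ^ K - 1) A) := Sub a (mem_nbhd _ aA).
have [y0 hy0] := equiv_env_forth n x0 (same_type_equiv_env hT).
have y0B : val y0 \in B.
  have hfv : {subset fv (FCol (@ord_max c) n) <= dom_env (upd (@empty_env _) n x0)}.
    by move=> v; rewrite inE => /eqP ->; rewrite unfold_in upd_eq.
  have [+ _] := proj2 hy0 (FCol (@ord_max c) n) (leq0n K) hfv.
  by rewrite /= !upd_eq /= !unlift_none; apply.
have hs : swappable K A B K (upd env n (val x0)) (upd env n (val y0)).
  exists (upd (@empty_env _) n x0), (upd (@empty_env _) n y0).
  apply: (swap_by_start Gsym) => // v o; rewrite /env; case: insubP => //= i _ _ [<-].
  exact: hw.
exists (val y0); split; first by rewrite /= upd_eq.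
by apply/(holds_liftf B); apply: (swappable_holds Gsym hAB hq hs).1.
Qed.

Theorem theorem4p2 (c k n : nat) (G : structure c) (A B : {set G})
  (w : 'I_n -> G) (phi : formula c) :
  is_graph G -> 1 <= k ->
  dist_gt A B (2 ^ k) ->
  same_type k
    (induced (M := expand A) (nbhd (M := G) (2 ^ k.-1 - 1) A))
    (induced (M := expand B) (nbhd (M := G) (2 ^ k.-1 - 1) B)) ->
  (* dist(wbar, A u B) >= 2^k *)
  (forall (i : 'I_n) b, b \in A :|: B -> ~~ within (2 ^ k - 1) (w i) b) ->
  all (fun v => v <= n) (fv phi) ->
  qrank phi <= k - 1 ->
  let env := fun i => omap w (insub i) in
  let psi := FEx n (FAnd (FCol ord_max n) (liftf phi)) in
  (holds (M := expand A) env psi <-> holds (M := expand B) env psi).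
Proof.
move=> [_ Gsym]; case: k => [//|K] _ hAB hT hw _; rewrite subn1 /= => hq.
split; first exact: (exists_in_transfer Gsym hAB hT hw hq).
apply: (exists_in_transfer Gsym _ _ _ hq).
- by move=> b a hb ha; rewrite within_sym //; apply: hAB.
- by move=> f hf hr; apply: iff_sym; apply: hT.
- by move=> i b; rewrite setUC; apply: hw.
Qed.
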